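(* Let $(\Omega,\mathcal{F},\mathbb{P})$ be a probability space, $k$ a positive integer, $\mathcal{S}$ a $k$-semiring on $\Omega$ with $\mathcal{S}\subseteq\mathcal{F}$, and $f\in L_1(\Omega,\mathcal{F},\mathbb{P})$. Then: (a) $\|f\|_{\mathcal{S}}\le\|f\|_{L_1}$. (b) If $\mathcal{B}$ is a $\sigma$-algebra on $\Omega$ with $\mathcal{B}\subseteq\mathcal{S}$, then $\|\mathbb{E}(f\mid\mathcal{B})\|_{\mathcal{S}}\le\|f\|_{\mathcal{S}}$. (c) If $\mathcal{S}$ is a $\sigma$-algebra, then $\|f\|_{\mathcal{S}}\le\|\mathbb{E}(f\mid\mathcal{S})\|_{L_1}\le 2\|f\|_{\mathcal{S}}$.
   Context: A collection $\mathcal{S}$ of subsets of a nonempty set $\Omega$ is a $k$-semiring on $\Omega$ if: $\emptyset,\Omega\in\mathcal{S}$; $S\cap T\in\mathcal{S}$ for $S,T\in\mathcal{S}$; for $S,T\in\mathcal{S}$ there exist $\ell\in\{1,\dots,k\}$ and pairwise disjoint $R_1,\dots,R_\ell\in\mathcal{S}$ with $S\setminus T=R_1\cup\dots\cup R_\ell$. The $\mathcal{S}$-uniformity norm is $\|f\|_{\mathcal{S}}=\sup\{|\int_S f\,d\mathbb{P}|:S\in\mathcal{S}\}$. *)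

From HB Require Import structures.
From mathcomp Require Import all_boot all_order all_algebra.
From mathcomp Require Import all_classical all_reals all_analysis.
Set Implicit Arguments. Unset Strict Implicit. Unset Printing Implicit Defensive.
Import Order.TTheory GRing.Theory Num.Theory.
Local Open Scope classical_set_scope.
Local Open Scope ring_scope.

Definition k_semiring (T : Type) (S : set (set T)) (k : nat) : Prop :=
  [/\ S set0, S setT,
      (forall A B, S A -> S B -> S (A `&` B)) &
      (forall A B, S A -> S B ->
         exists l : nat, exists Rs : nat -> set T,
           [/\ (1 <= l)%N, (l <= k)%N,
               (forall i, (i < l)%N -> S (Rs i)),
               trivIset [set i | (i < l)%N] Rs &
               A `\` B = \bigcup_(i < l) Rs i])].

Definition S_norm d (T : measurableType d) (R : realType)
  (P : probability T R) (S : set (set T)) (f : T -> R) : \bar R :=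
  ereal_sup [set `| \int[P]_(x in A) (f x)%:E |%E | A in S].

Definition L1_norm d (T : measurableType d) (R : realType)
  (P : probability T R) (f : T -> R) : \bar R :=
  (\int[P]_x `|(f x)%:E|)%E.

Definition measurable_wrt d (T : measurableType d) (R : realType)
  (B : set (set T)) (g : T -> R) : Prop :=
  forall Y : set R, measurable Y -> B (g @^-1` Y).

Definition is_cond_exp d (T : measurableType d) (R : realType)
  (P : probability T R) (B : set (set T)) (f g : T -> R) : Prop :=
  [/\ measurable_wrt B g,
      P.-integrable setT (EFin \o g) &
      forall A, B A -> (\int[P]_(x in A) (g x)%:E = \int[P]_(x in A) (f x)%:E)%E].

From HB Require Import structures.
From mathcomp Require Import all_boot all_order all_algebra.
From mathcomp Require Import all_classical all_reals all_analysis.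
From mathcomp Require Import measurable_realfun.
Set Implicit Arguments. Unset Strict Implicit. Unset Printing Implicit Defensive.
Import Order.TTheory GRing.Theory Num.Theory.
Local Open Scope classical_set_scope.
Local Open Scope ring_scope.

(** Everything rests on the sign sets [{g > 0}] and [{g <= 0}] of an
    integrable [g]: for every measurable [A] the integral of [g] over [A] lies
    between the integrals over these two sets, and [||g||_1] is their
    difference.  If [g] is measurable with respect to a sub-system [B] of [S],
    both sets belong to [B], where integrals of [g] and of [f] coincide when
    [g] is a conditional expectation of [f] given [B]; this bounds
    [||g||_S] and [||g||_1] by [||f||_S] and [2 ||f||_S].  Part (a) is the
    triangle inequality for integrals. *)

Section integral_sign_sets.
Context d (T : measurableType d) (R : realType) (mu : {measure set T -> \bar R}).
Variable g : T -> R.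
Hypothesis ig : mu.-integrable setT (EFin \o g).
Local Open Scope ereal_scope.

Let mg : measurable_fun setT g.
Proof. exact/measurable_EFinP/(measurable_int mu ig). Qed.

Let measurable_gt0 : measurable [set x | (0 < g x)%R].
Proof. by rewrite -preimage_itvoy -[_ @^-1` _]setTI; exact: mg. Qed.

Let measurable_le0 : measurable [set x | (g x <= 0)%R].
Proof. by rewrite -preimage_itvNyc -[_ @^-1` _]setTI; exact: mg. Qed.

Let integrable_restrict A : measurable A -> mu.-integrable setT ((EFin \o g) \_ A).
Proof.
by move=> mA; apply/(integrable_mkcond _ mA)/(integrableS measurableT mA _ ig).
Qed.

Let mem_gt0 x : (x \in [set x | (0 < g x)%R]) = (0 < g x)%R.
Proof. by apply/idP/idP; rewrite inE. Qed.

Let mem_le0 x : (x \in [set x | (g x <= 0)%R]) = (g x <= 0)%R.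
Proof. by apply/idP/idP; rewrite inE. Qed.

Lemma integral_le_integral_gt0 A : measurable A ->
  \int[mu]_(x in A) (g x)%:E <= \int[mu]_(x in [set x | (0 < g x)%R]) (g x)%:E.
Proof.
move=> mA; rewrite integral_mkcond [leRHS]integral_mkcond.
apply: le_integral => //; [exact: integrable_restrict|exact: integrable_restrict|].
move=> x _; rewrite !patchE mem_gt0 /point /=.
by case: ifP => _; case: ifPn => [/ltW|]; rewrite lee_fin // leNgt.
Qed.

Lemma integral_le0_le_integral A : measurable A ->
  \int[mu]_(x in [set x | (g x <= 0)%R]) (g x)%:E <= \int[mu]_(x in A) (g x)%:E.
Proof.
move=> mA; rewrite integral_mkcond [leRHS]integral_mkcond.
apply: le_integral => //; [exact: integrable_restrict|exact: integrable_restrict|].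
move=> x _; rewrite !patchE mem_le0 /point /=.
by case: ifPn; case: ifP => _; rewrite lee_fin // -ltNge => /ltW.
Qed.

Lemma integral_abs_sign_sets : \int[mu]_x `|(g x)%:E| =
  \int[mu]_(x in [set x | (0 < g x)%R]) (g x)%:E -
  \int[mu]_(x in [set x | (g x <= 0)%R]) (g x)%:E.
Proof.
rewrite [X in X - _]integral_mkcond [X in _ - X]integral_mkcond.
rewrite -integralB //; [|exact: integrable_restrict|exact: integrable_restrict].
apply: eq_integral => x _; rewrite !patchE mem_gt0 mem_le0 /point /=.
case: (ltP 0%R (g x)) => [gt0|le0].
- by rewrite sube0 gtr0_norm.
- by rewrite sub0e ler0_norm.
Qed.

Lemma abs_integral_le_sign_sets A : measurable A ->
  `| \int[mu]_(x in A) (g x)%:E | <=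
     `| \int[mu]_(x in [set x | (0 < g x)%R]) (g x)%:E | \/
  `| \int[mu]_(x in A) (g x)%:E | <=
     `| \int[mu]_(x in [set x | (g x <= 0)%R]) (g x)%:E |.
Proof.
move=> mA; case: (leP 0 (\int[mu]_(x in A) (g x)%:E)) => [ge0|lt0].
- left; rewrite gee0_abs //.
  exact: le_trans (integral_le_integral_gt0 mA) (lee_abs _).
- right; rewrite lte0_abs // -abseN.
  by apply: le_trans (lee_abs _); rewrite leeN2 integral_le0_le_integral.
Qed.

End integral_sign_sets.

Section uniformity_norm.
Context d (T : measurableType d) (R : realType) (P : probability T R).
Implicit Types (S B : set (set T)) (f g : T -> R).
Local Open Scope ereal_scope.

Lemma abs_integral_le_S_norm S f A : S A ->
  `| \int[P]_(x in A) (f x)%:E | <= S_norm P S f.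
Proof. by move=> SA; apply: ereal_sup_ubound; exists A. Qed.

Lemma eq_S_norm S f g :
  (forall A, S A -> \int[P]_(x in A) (f x)%:E = \int[P]_(x in A) (g x)%:E) ->
  S_norm P S f = S_norm P S g.
Proof.
move=> fg; rewrite /S_norm; congr ereal_sup; apply/seteqP.
by split=> _ [A SA <-]; exists A; rewrite // fg.
Qed.

Lemma abs_integral_le_L1_norm f A : measurable A ->
  P.-integrable setT (EFin \o f) ->
  `| \int[P]_(x in A) (f x)%:E | <= L1_norm P f.
Proof.
move=> mA intf; have mf := measurable_int _ intf.
apply: le_trans (le_abse_integral _ mA (measurable_funS measurableT _ mf)) _ => //.
apply: ge0_subset_integral => //.
exact: measurableT_comp (@abse_measurable _ _) mf.
Qed.

Lemma S_norm_le_L1_norm S f : S `<=` measurable ->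
  P.-integrable setT (EFin \o f) -> S_norm P S f <= L1_norm P f.
Proof.
move=> Smeas intf; apply: ge_ereal_sup => _ [A SA <-].
exact: abs_integral_le_L1_norm (Smeas _ SA) intf.
Qed.

Lemma measurable_wrt_sign_sets B g : measurable_wrt B g ->
  B [set x | (0 < g x)%R] /\ B [set x | (g x <= 0)%R].
Proof.
move=> gB; rewrite -preimage_itvoy -preimage_itvNyc.
by split; apply: gB; exact: measurable_itv.
Qed.

Lemma S_norm_cond_exp_le S B f g : S `<=` measurable -> B `<=` S ->
  is_cond_exp P B f g -> S_norm P S g <= S_norm P S f.
Proof.
move=> Smeas BS [gB ig gf]; have [Bgt0 Ble0] := measurable_wrt_sign_sets gB.
apply: ge_ereal_sup => _ [A SA <-].
by case: (abs_integral_le_sign_sets ig (Smeas _ SA)) => /le_trans; apply;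
  rewrite gf //; exact/abs_integral_le_S_norm/BS.
Qed.

Lemma L1_norm_cond_exp_le S f g : is_cond_exp P S f g ->
  L1_norm P g <= 2%:E * S_norm P S f.
Proof.
move=> [gS ig gf]; have [Sgt0 Sle0] := measurable_wrt_sign_sets gS.
rewrite /L1_norm (integral_abs_sign_sets ig) (gf _ Sgt0) (gf _ Sle0).
rewrite mule_natl mule2n; apply: le_trans (lee_abs _) _.
apply: le_trans (lee_abs_sub _ _) _.
exact: leeD (abs_integral_le_S_norm _ Sgt0) (abs_integral_le_S_norm _ Sle0).
Qed.

End uniformity_norm.

Theorem lemma2p5 (d : measure_display) (T : measurableType d) (R : realType)
  (P : probability T R) (k : nat) (S : set (set T)) (f : T -> R) :
  (0 < k)%N -> k_semiring S k -> S `<=` measurable ->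
  P.-integrable setT (EFin \o f) ->
  [/\ (S_norm P S f <= L1_norm P f)%E,
      (forall B : set (set T), sigma_algebra setT B -> B `<=` S ->
         forall g : T -> R, is_cond_exp P B f g ->
         (S_norm P S g <= S_norm P S f)%E) &
      (sigma_algebra setT S ->
         forall g : T -> R, is_cond_exp P S f g ->
         (S_norm P S f <= L1_norm P g)%E /\
         (L1_norm P g <= 2%:E * S_norm P S f)%E)].
Proof.
move=> _ _ Smeas intf; split.
- exact: S_norm_le_L1_norm.
- by move=> B _ BS g; exact: S_norm_cond_exp_le.
- move=> _ g gf; split; last exact: L1_norm_cond_exp_le gf.
  have [_ ig gfS] := gf.
  by rewrite (eq_S_norm (g := g)) ?S_norm_le_L1_norm // => A SA; rewrite gfS.
Qed.
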